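(* Under the standing setup (with $f$ possibly unbounded), let $t\ge0$ and let $(\pi_n)_{n\in\mathbb N}\subset P_t$ satisfy $\pi_n\subset\pi_{n+1}$ for all $n$ and $|\pi_n|_\infty\searrow0$ as $n\to\infty$. Then for all $u_0\in\mathbb R^d$, $\mathcal E_{\pi_n}u_0\nearrow\mathscr S(t)u_0$ as $n\to\infty$.
   Context: Standing setup: $d\in\mathbb N$; vectors in $\mathbb R^d$ with $\|u\|_\infty=\max_i|u_i|$; inequalities and suprema of vectors are componentwise; reals are identified with constant vectors. A $Q$-matrix is $q\in\mathbb R^{d\times d}$ with $q_{ii}\le0$, $q_{ij}\ge0$ ($i\ne j$), $\sum_jq_{ij}=0$. Let $\mathcal P$ be a set of $Q$-matrices and $f=(f_q)_{q\in\mathcal P}\subset\mathbb R^d$ with $\sup_{q\in\mathcal P}f_q=f_{q_0}=0$ for some $q_0\in\mathcal P$, such that $\mathcal Qu:=\sup_{q\in\mathcal P}(qu+f_q)$ is finite for every $u\in\mathbb R^d$. For $q\in\mathcal P$, $t\ge0$: $S_q(t)u_0:=e^{tq}u_0+\int_0^te^{sq}f_q\,ds$. For $h\ge0$: $\mathcal E_hu_0:=\sup_{q\in\mathcal P}S_q(h)u_0$. $P$ is the set of finite subsets $\pi\subset[0,\infty)$ with $0\in\pi$; $P_t:=\{\pi\in P:\max\pi=t\}$. For $\pi=\{t_0,\dots,t_m\}$ with $0=t_0<\dots<t_m$, $m\ge1$, $\mathcal E_\pi:=\mathcal E_{t_1-t_0}\circ\cdots\circ\mathcal E_{t_m-t_{m-1}}$,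 and $\mathcal E_{\{0\}}:=\mathcal E_0$; the mesh size is $|\pi|_\infty:=\max_j(t_j-t_{j-1})$, $|\{0\}|_\infty:=0$. The Nisio semigroup of $(\mathcal P,f)$ is $\mathscr S(t)u_0:=\sup_{\pi\in P_t}\mathcal E_\pi u_0$. *)

From Stdlib Require Import Reals List ClassicalEpsilon Factorial Sorted.
Import ListNotations.
Open Scope R_scope.

(* Vectors in R^d: functions nat -> R, only indices i < d matter.
   Matrices in R^{d x d}: functions nat -> nat -> R. *)
Definition vec := nat -> R.
Definition mat := nat -> nat -> R.

Fixpoint sumR (n : nat) (g : nat -> R) : R :=
  match n with O => 0 | S m => sumR m g + g m end.

Definition mv (d : nat) (q : mat) (u : vec) : vec :=
  fun i => sumR d (fun j => q i j * u j).

Fixpoint mpow (d : nat) (q : mat) (k : nat) (u : vec) : vec :=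
  match k with O => u | S k' => mv d q (mpow d q k' u) end.

Definition is_Qmatrix (d : nat) (q : mat) : Prop :=
  (forall i, (i < d)%nat -> q i i <= 0) /\
  (forall i j, (i < d)%nat -> (j < d)%nat -> i <> j -> 0 <= q i j) /\
  (forall i, (i < d)%nat -> sumR d (fun j => q i j) = 0).

Definition Rlim (u : nat -> R) : R :=
  epsilon (inhabits 0) (fun l => Un_cv u l).

Definition Rsup (E : R -> Prop) : R :=
  epsilon (inhabits 0) (fun l => is_lub E l).

Definition Rint (g : R -> R) (a b : R) : R :=
  epsilon (inhabits 0)
    (fun I => exists pr : Riemann_integrable g a b, RiemannInt pr = I).

Definition expm (d : nat) (q : mat) (t : R) (u : vec) : vec :=
  fun i => Rlim (fun N => sum_f_R0 (fun k => t ^ k / INR (fact k) * mpow d q k u i) N).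

Definition Sq (d : nat) (q : mat) (fq : vec) (t : R) (u0 : vec) : vec :=
  fun i => expm d q t u0 i + Rint (fun s => expm d q s fq i) 0 t.

Definition vsup {A : Type} (F : A -> Prop) (v : A -> vec) : vec :=
  fun i => Rsup (fun x => exists a, F a /\ x = v a i).

Definition Eh (d : nat) (P : mat -> Prop) (f : mat -> vec) (h : R) (u0 : vec) : vec :=
  vsup P (fun q => Sq d q (f q) h u0).

(* Partitions: a finite subset {t_0 < ... < t_m} of [0,oo) containing 0 is
   represented by the strictly increasing list [t_0; ...; t_m] with t_0 = 0. *)
Definition is_partition (l : list R) : Prop :=
  hd 1 l = 0 /\ StronglySorted Rlt l.

Definition is_partition_t (t : R) (l : list R) : Prop :=
  is_partition l /\ last l 0 = t.

Fixpoint Epi_aux (d : nat) (P : mat -> Prop) (f : mat -> vec)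
  (prev : R) (rest : list R) (u : vec) : vec :=
  match rest with
  | [] => u
  | x :: r => Eh d P f (x - prev) (Epi_aux d P f x r u)
  end.

Definition Epi (d : nat) (P : mat -> Prop) (f : mat -> vec) (l : list R) (u : vec) : vec :=
  match l with
  | [] => u
  | [t0] => Eh d P f 0 u
  | t0 :: rest => Epi_aux d P f t0 rest u
  end.

Fixpoint mesh_aux (prev : R) (rest : list R) : R :=
  match rest with
  | [] => 0
  | x :: r => Rmax (x - prev) (mesh_aux x r)
  end.

Definition mesh (l : list R) : R :=
  match l with [] => 0 | t0 :: rest => mesh_aux t0 rest end.

Definition Nisio (d : nat) (P : mat -> Prop) (f : mat -> vec) (t : R) (u0 : vec) : vec :=
  vsup (is_partition_t t) (fun l => Epi d P f l u0).

(* Each [S_q(h)] is affine, monotone and preserves constants up to the nonpositive source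
   term, so [E_h] is monotone and [E_h u <= max u]; the semigroup law of [S_q] gives
   [E_(h+k) <= E_h o E_k].  Hence refining a partition increases [E_pi], so [E_(pi_n)]
   increases and stays below the Nisio supremum.  Conversely [E_h u] is lower semicontinuous
   in [h], being a supremum of continuous functions, so every [E_l] is approximated from below
   by [E_sg] once the mesh of [sg] is small: snapping the points of [l] to [sg] produces a
   coarsening of [sg] close to [l].  The flows [S_q] are realised as power series and their
   properties follow from uniqueness for linear ODEs (a Gronwall estimate). *)

From Stdlib Require Import Reals List Lia Lra Psatz Sorted Factorial.
From Stdlib Require Import Classical ClassicalEpsilon FunctionalExtensionality.
From Coquelicot Require Import Coquelicot.
Import ListNotations.
Open Scope R_scope.

Lemma sumR_ext n g h : (forall j, (j < n)%nat -> g j = h j) -> sumR n g = sumR n h.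
Proof.
  induction n as [|n IH]; intros H; simpl; auto.
  rewrite IH by (intros; apply H; lia). rewrite H by lia. reflexivity.
Qed.

Lemma sumR_plus n g h : sumR n (fun j => g j + h j) = sumR n g + sumR n h.
Proof. induction n as [|n IH]; simpl; [lra|]. rewrite IH; lra. Qed.

Lemma sumR_scal n c g : sumR n (fun j => c * g j) = c * sumR n g.
Proof. induction n as [|n IH]; simpl; [lra|]. rewrite IH; lra. Qed.

Lemma sumR_const n c : sumR n (fun _ => c) = INR n * c.
Proof. induction n as [|n IH]; simpl sumR; [simpl; lra|]. rewrite IH, S_INR; lra. Qed.

Lemma sumR_eq0 n g : (forall j, (j < n)%nat -> g j = 0) -> sumR n g = 0.
Proof. intros H. rewrite (sumR_ext n g (fun _ => 0)), sumR_const by auto. lra. Qed.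

Lemma sumR_le n g h : (forall j, (j < n)%nat -> g j <= h j) -> sumR n g <= sumR n h.
Proof.
  induction n as [|n IH]; simpl; intros H; [lra|].
  assert (sumR n g <= sumR n h) by (apply IH; intros; apply H; lia).
  specialize (H n ltac:(lia)). lra.
Qed.

Lemma sumR_nonneg n g : (forall j, (j < n)%nat -> 0 <= g j) -> 0 <= sumR n g.
Proof.
  intros H. replace 0 with (sumR n (fun _ => 0)) by (rewrite sumR_const; lra).
  apply sumR_le; auto.
Qed.

Lemma Rabs_sumR_le n g : Rabs (sumR n g) <= sumR n (fun j => Rabs (g j)).
Proof.
  induction n as [|n IH]; simpl; [rewrite Rabs_R0; lra|].
  eapply Rle_trans; [apply Rabs_triang|lra].
Qed.

Lemma sumR_ge_term n g j :
  (forall k, (k < n)%nat -> 0 <= g k) -> (j < n)%nat -> g j <= sumR n g.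
Proof.
  induction n as [|n IH]; intros H Hj; [lia|]. simpl.
  assert (0 <= sumR n g) by (apply sumR_nonneg; intros; apply H; lia).
  destruct (Nat.eq_dec j n) as [->|Hne]; [lra|].
  specialize (IH ltac:(intros; apply H; lia) ltac:(lia)). specialize (H n ltac:(lia)). lra.
Qed.

Lemma sumR_kronecker n i c (y : nat -> R) : (i < n)%nat ->
  sumR n (fun j => (if Nat.eq_dec i j then c else 0) * y j) = c * y i.
Proof.
  induction n as [|n IH]; intros Hi; [lia|]. simpl.
  destruct (Nat.eq_dec i n) as [->|Hne].
  - rewrite sumR_eq0; [lra|]. intros j Hj. destruct (Nat.eq_dec n j); [lia|lra].
  - rewrite IH by lia. lra.
Qed.

Lemma is_derive_sumR n (g : nat -> R -> R) (dg : nat -> R) x :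
  (forall j, (j < n)%nat -> is_derive (g j) x (dg j)) ->
  is_derive (fun s => sumR n (fun j => g j s)) x (sumR n dg).
Proof.
  induction n as [|n IH]; simpl; intros H.
  - exact (@is_derive_const R_AbsRing R_NormedModule 0 x).
  - apply (is_derive_plus (fun s => sumR n (fun j => g j s)) (g n)).
    + apply IH; intros; apply H; lia.
    + apply H; lia.
Qed.

Lemma PSeries_sumR n (c : nat -> nat -> R) x :
  (forall j, (j < n)%nat -> ex_pseries (c j) x) ->
  ex_pseries (fun k => sumR n (fun j => c j k)) x /\
  PSeries (fun k => sumR n (fun j => c j k)) x = sumR n (fun j => PSeries (c j) x).
Proof.
  induction n as [|n IH]; intros H; simpl.
  - split; [|apply PSeries_const_0].
    apply CV_radius_inside; rewrite CV_radius_const_0; simpl; auto.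
  - destruct IH as [Hex Heq]; [intros; apply H; lia|].
    assert (Hn : ex_pseries (c n) x) by (apply H; lia).
    split.
    + apply ex_pseries_ext with (PS_plus (fun k => sumR n (fun j => c j k)) (c n));
        [reflexivity|apply ex_pseries_plus; auto].
    + rewrite <- Heq, <- PSeries_plus by auto. apply PSeries_ext. reflexivity.
Qed.

(* Real-valued specialisations of Coquelicot's rules, in a shape usable by [eapply]. *)
Lemma is_derive_Rplus (g h : R -> R) x a b :
  is_derive g x a -> is_derive h x b -> is_derive (fun s => g s + h s) x (a + b).
Proof. intros; apply (is_derive_plus g h); auto. Qed.

Lemma is_derive_Rminus (g h : R -> R) x a b :
  is_derive g x a -> is_derive h x b -> is_derive (fun s => g s - h s) x (a - b).
Proof. intros; apply (is_derive_minus g h); auto. Qed.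

Lemma is_derive_Rmult (g h : R -> R) x a b :
  is_derive g x a -> is_derive h x b -> is_derive (fun s => g s * h s) x (a * h x + g x * b).
Proof. intros; apply (is_derive_mult g h); auto. intros; apply Rmult_comm. Qed.

Lemma is_derive_Rscal (g : R -> R) c x a :
  is_derive g x a -> is_derive (fun s => c * g s) x (c * a).
Proof. intros; apply (is_derive_scal g); auto. Qed.

Lemma is_derive_Rconst (c x : R) : is_derive (fun _ => c) x 0.
Proof. exact (@is_derive_const R_AbsRing R_NormedModule c x). Qed.

Lemma is_derive_eq (g : R -> R) x l l' : is_derive g x l -> l = l' -> is_derive g x l'.
Proof. intros H <-; exact H. Qed.

Lemma is_derive_shift (g : R -> R) h x l :
  is_derive g (x + h) l -> is_derive (fun s => g (s + h)) x l.
Proof.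
  intros H. apply is_derive_eq with (scal 1 l).
  - apply (is_derive_comp g (fun s => s + h)); [exact H|].
    apply is_derive_eq with (1 + 0);
      [apply is_derive_Rplus; [apply (@is_derive_id R_AbsRing)|apply is_derive_Rconst]|].
    cbn; ring.
  - cbn; unfold mult; cbn; ring.
Qed.

Lemma is_derive_continuity_pt (g : R -> R) x l : is_derive g x l -> continuity_pt g x.
Proof.
  intros H. apply continuity_pt_filterlim, (ex_derive_continuous g). exists l; exact H.
Qed.

Lemma is_derive_exp_scal (K x : R) : is_derive (fun s => exp (- (K * s))) x (exp (- (K * x)) * - K).
Proof. auto_derive; [exact I|ring]. Qed.

Lemma derive0_eq (g : R -> R) s : (forall x, is_derive g x 0) -> g s = g 0.
Proof.
  intros H. destruct (MVT_gen g 0 s (fun _ => 0)) as [c [_ Hc]].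
  - intros; apply H.
  - intros; eapply is_derive_continuity_pt, H.
  - lra.
Qed.

(* Gronwall: the derivative of [V s * exp (- K s)] is nonpositive. *)
Lemma gronwall_nonpos (V dV : R -> R) K s :
  (forall x, is_derive V x (dV x)) -> (forall x, dV x <= K * V x) ->
  V 0 = 0 -> 0 <= s -> V s <= 0.
Proof.
  intros HV HdV H0 Hs.
  set (dW := fun x => dV x * exp (- (K * x)) + V x * (exp (- (K * x)) * - K)).
  assert (HW : forall x, is_derive (fun x => V x * exp (- (K * x))) x (dW x)).
  { intros x. apply (is_derive_Rmult V (fun x => exp (- (K * x))));
      [apply HV|apply is_derive_exp_scal]. }
  destruct (MVT_gen (fun x => V x * exp (- (K * x))) 0 s dW) as [c [_ Hc]].
  - intros; apply HW.
  - intros; eapply is_derive_continuity_pt, HW.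
  - assert (dW c <= 0).
    { unfold dW. specialize (HdV c). pose proof (exp_pos (- (K * c))). nra. }
    rewrite H0 in Hc. pose proof (exp_pos (- (K * s))). nra.
Qed.

Lemma Rsup_lub (E : R -> Prop) : (exists x, E x) -> bound E -> is_lub E (Rsup E).
Proof.
  intros Hne Hb. unfold Rsup. apply epsilon_spec.
  destruct (completeness E Hb Hne) as [m Hm]. eauto.
Qed.

Section LinearFlow.

Variable d : nat.

Lemma mat_abs_bound (A : mat) :
  exists M, 0 <= M /\ forall i j, (i < d)%nat -> (j < d)%nat -> Rabs (A i j) <= M.
Proof.
  set (S i := sumR d (fun j => Rabs (A i j))).
  assert (HS : forall i, 0 <= S i) by (intros; apply sumR_nonneg; intros; apply Rabs_pos).
  exists (sumR d S). split; [apply sumR_nonneg; auto|].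
  intros i j Hi Hj. apply Rle_trans with (S i).
  - apply (sumR_ge_term d (fun j => Rabs (A i j))); auto. intros; apply Rabs_pos.
  - apply sumR_ge_term; auto.
Qed.

Lemma vec_abs_bound (w : vec) : exists W, 0 <= W /\ forall j, (j < d)%nat -> Rabs (w j) <= W.
Proof.
  destruct (mat_abs_bound (fun _ j => w j)) as [M [HM H]].
  exists M; split; auto. intros j Hj. destruct d; [lia|]. apply (H 0%nat j); lia.
Qed.

Lemma vec_upper_bound (v : vec) : exists m, forall j, (j < d)%nat -> v j <= m.
Proof.
  destruct (vec_abs_bound v) as [W [_ HW]]. exists W.
  intros j Hj. specialize (HW j Hj). pose proof (Rle_abs (v j)). lra.
Qed.

Lemma mpow_abs_bound A w M W : 0 <= M ->
  (forall i j, (i < d)%nat -> (j < d)%nat -> Rabs (A i j) <= M) ->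
  (forall j, (j < d)%nat -> Rabs (w j) <= W) ->
  forall k i, (i < d)%nat -> Rabs (mpow d A k w i) <= W * (INR d * M) ^ k.
Proof.
  intros HM HA Hw k. induction k as [|k IH]; intros i Hi; simpl; [rewrite Rmult_1_r; auto|].
  unfold mv. eapply Rle_trans; [apply Rabs_sumR_le|].
  eapply Rle_trans; [apply (sumR_le _ _ (fun _ => M * (W * (INR d * M) ^ k)))|].
  - intros j Hj. rewrite Rabs_mult. apply Rmult_le_compat; auto using Rabs_pos.
  - rewrite sumR_const. lra.
Qed.

Definition exp_coef (A : mat) (w : vec) (i k : nat) : R := mpow d A k w i / INR (fact k).

Definition exp_ps (A : mat) (w : vec) (s : R) (i : nat) : R := PSeries (exp_coef A w i) s.

Lemma exp_coef_CV_disk A w i x : (i < d)%nat -> CV_disk (exp_coef A w i) x.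
Proof.
  intros Hi.
  destruct (mat_abs_bound A) as [M [HM HA]]. destruct (vec_abs_bound w) as [W [HW Hw]].
  apply (@ex_series_le R_AbsRing R_CompleteNormedModule _
           (fun n => W * ((INR d * M * Rabs x) ^ n / INR (fact n)))).
  - intros n. change norm with Rabs. rewrite Rabs_Rabsolu. unfold exp_coef, Rdiv.
    rewrite !Rabs_mult, Rabs_inv, <- RPow_abs, Rpow_mult_distr.
    rewrite (Rabs_pos_eq (INR (fact n))) by apply pos_INR.
    pose proof (mpow_abs_bound A w M W HM HA Hw n i Hi).
    assert (0 < / INR (fact n)) by (apply Rinv_0_lt_compat, lt_0_INR, lt_O_fact).
    assert (0 <= Rabs x ^ n) by (apply pow_le, Rabs_pos).
    replace (W * ((INR d * M) ^ n * Rabs x ^ n * / INR (fact n))) with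
      (W * (INR d * M) ^ n * (/ INR (fact n) * Rabs x ^ n)) by ring.
    rewrite Rmult_assoc. apply Rmult_le_compat_r; [apply Rmult_le_pos; lra|auto].
  - apply (ex_series_scal W (fun n => (INR d * M * Rabs x) ^ n / INR (fact n))).
    eexists. eapply is_series_ext; [|apply (is_exp_Reals (INR d * M * Rabs x))].
    intros n. cbn. rewrite pow_n_pow. unfold scal; cbn; unfold mult; cbn. unfold Rdiv; ring.
Qed.

Lemma exp_coef_CV_radius A w i x : (i < d)%nat -> Rbar_lt (Rabs x) (CV_radius (exp_coef A w i)).
Proof.
  intros Hi. destruct (Lub_Rbar_correct (CV_disk (exp_coef A w i))) as [Hub _].
  specialize (Hub (Rabs x + 1) (exp_coef_CV_disk A w i (Rabs x + 1) Hi)).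
  unfold CV_radius. destruct (Lub_Rbar (CV_disk (exp_coef A w i))); simpl in *; auto; lra.
Qed.

Lemma ex_pseries_exp_coef A w i x : (i < d)%nat -> ex_pseries (exp_coef A w i) x.
Proof. intros; apply CV_radius_inside, exp_coef_CV_radius; auto. Qed.

Lemma exp_ps_0 A w i : exp_ps A w 0 i = w i.
Proof. unfold exp_ps. rewrite PSeries_0. unfold exp_coef. simpl. lra. Qed.

Lemma is_derive_exp_ps A w s i : (i < d)%nat ->
  is_derive (fun s => exp_ps A w s i) s (sumR d (fun j => A i j * exp_ps A w s j)).
Proof.
  intros Hi. unfold exp_ps. eapply is_derive_eq.
  { apply is_derive_PSeries, exp_coef_CV_radius; auto. }
  rewrite PSeries_ext with (b := fun k => sumR d (fun j => A i j * exp_coef A w j k)).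
  - assert (Hx : forall j, (j < d)%nat -> ex_pseries (fun k => A i j * exp_coef A w j k) s).
    { intros j Hj. apply ex_pseries_ext with (PS_scal (A i j) (exp_coef A w j)); [reflexivity|].
      apply ex_pseries_scal; [cbn; unfold mult; cbn; ring|apply ex_pseries_exp_coef; auto]. }
    rewrite (proj2 (PSeries_sumR d (fun j k => A i j * exp_coef A w j k) s Hx)).
    apply sumR_ext. intros j Hj. apply (PSeries_scal (A i j) (exp_coef A w j)).
  - intros n. unfold PS_derive, exp_coef, Rdiv. simpl mpow. unfold mv.
    transitivity (/ INR (fact n) * sumR d (fun j => A i j * mpow d A n w j)).
    + rewrite fact_simpl, mult_INR. field. split; [apply INR_fact_neq_0|apply not_0_INR; lia].
    + rewrite <- sumR_scal. apply sumR_ext; intros; ring.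
Qed.

Definition linear_ode (B : mat) (Y : nat -> R -> R) : Prop :=
  forall i s, (i < d)%nat -> is_derive (Y i) s (sumR d (fun j => B i j * Y j s)).

Lemma linear_ode_exp_ps A w : linear_ode A (fun i s => exp_ps A w s i).
Proof. intros i s Hi. apply is_derive_exp_ps; auto. Qed.

Lemma linear_ode_lincomb B Y1 Y2 a b : linear_ode B Y1 -> linear_ode B Y2 ->
  linear_ode B (fun i s => a * Y1 i s + b * Y2 i s).
Proof.
  intros H1 H2 i s Hi. eapply is_derive_eq.
  - apply is_derive_Rplus; apply is_derive_Rscal; [apply H1|apply H2]; auto.
  - rewrite <- !sumR_scal, <- sumR_plus. apply sumR_ext; intros; ring.
Qed.

Lemma linear_ode_const B c : (forall i, (i < d)%nat -> sumR d (fun j => B i j) = 0) ->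
  linear_ode B (fun _ _ => c).
Proof.
  intros Hrow i s Hi. eapply is_derive_eq; [apply is_derive_Rconst|].
  rewrite (sumR_ext _ _ (fun j => c * B i j)) by (intros; ring).
  rewrite sumR_scal, Hrow by auto. symmetry; apply Rmult_0_r.
Qed.

Lemma two_mul_le_sum_sqr B M a b : Rabs B <= M -> 2 * B * a * b <= M * (a * a + b * b).
Proof.
  intros H. pose proof (Rle_abs B). pose proof (Rle_abs (- B)). rewrite Rabs_Ropp in *.
  pose proof (Rle_0_sqr (a - b)). pose proof (Rle_0_sqr (a + b)). unfold Rsqr in *.
  destruct (Rle_lt_dec 0 B).
  - assert (0 <= (M - B) * (a * a + b * b)) by (apply Rmult_le_pos; nra). nra.
  - assert (0 <= (M + B) * (a * a + b * b)) by (apply Rmult_le_pos; nra). nra.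
Qed.

Lemma linear_ode_sqnorm_growth B Y : linear_ode B Y ->
  exists K dV, (forall x, is_derive (fun s => sumR d (fun i => Y i s * Y i s)) x (dV x)) /\
    forall x, dV x <= K * sumR d (fun i => Y i x * Y i x).
Proof.
  intros HY. destruct (mat_abs_bound B) as [M [HM HB]].
  exists (2 * INR d * M), (fun s => sumR d (fun i => 2 * Y i s * sumR d (fun j => B i j * Y j s))).
  split.
  - intros x. apply is_derive_sumR. intros i Hi. eapply is_derive_eq.
    + apply is_derive_Rmult; apply HY; auto.
    + cbn; ring.
  - intros x.
    eapply Rle_trans.
    { apply (sumR_le _ _ (fun i => sumR d (fun j => M * (Y i x * Y i x + Y j x * Y j x)))).
      intros i Hi. rewrite <- sumR_scal. apply sumR_le. intros j Hj.
      replace (2 * Y i x * (B i j * Y j x)) with (2 * B i j * Y i x * Y j x) by ring.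
      apply two_mul_le_sum_sqr; auto. }
    rewrite (sumR_ext d _ (fun i => INR d * M * (Y i x * Y i x)
                                    + sumR d (fun j => M * (Y j x * Y j x)))).
    + rewrite sumR_plus, sumR_scal, sumR_const, sumR_scal. lra.
    + intros i Hi. rewrite Rmult_assoc, <- sumR_const, <- sumR_plus.
      apply sumR_ext; intros; ring.
Qed.

Lemma linear_ode_zero B Y : linear_ode B Y -> (forall i, (i < d)%nat -> Y i 0 = 0) ->
  forall s, 0 <= s -> forall i, (i < d)%nat -> Y i s = 0.
Proof.
  intros HY H0 s Hs i Hi.
  destruct (linear_ode_sqnorm_growth B Y HY) as [K [dV [HV HdV]]].
  assert (sumR d (fun i => Y i s * Y i s) <= 0).
  { apply (gronwall_nonpos (fun s => sumR d (fun i => Y i s * Y i s)) dV K); auto.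
    apply sumR_eq0. intros j Hj. rewrite H0; auto; ring. }
  assert (Y i s * Y i s <= sumR d (fun i => Y i s * Y i s))
    by (apply (sumR_ge_term d (fun i => Y i s * Y i s)); auto; intros; nra).
  nra.
Qed.

Lemma linear_ode_unique B Y1 Y2 : linear_ode B Y1 -> linear_ode B Y2 ->
  (forall i, (i < d)%nat -> Y1 i 0 = Y2 i 0) ->
  forall s, 0 <= s -> forall i, (i < d)%nat -> Y1 i s = Y2 i s.
Proof.
  intros H1 H2 H0 s Hs i Hi.
  enough (1 * Y1 i s + -1 * Y2 i s = 0) by lra.
  apply (linear_ode_zero B (fun i s => 1 * Y1 i s + -1 * Y2 i s)); auto.
  - apply linear_ode_lincomb; auto.
  - intros j Hj. rewrite H0; auto; ring.
Qed.

Lemma exp_ps_nonneg_of_nonneg A v s i :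
  (forall i j, (i < d)%nat -> (j < d)%nat -> 0 <= A i j) ->
  (forall j, (j < d)%nat -> 0 <= v j) -> 0 <= s -> (i < d)%nat -> 0 <= exp_ps A v s i.
Proof.
  intros HA Hv Hs Hi.
  assert (Hm : forall k i, (i < d)%nat -> 0 <= mpow d A k v i).
  { induction k as [|k IH]; intros j Hj; simpl; auto.
    apply sumR_nonneg. intros l Hl. apply Rmult_le_pos; auto. }
  rewrite <- (PSeries_const_0 0). apply Series_le.
  - intros n. cbn. rewrite Rmult_0_l. split; [lra|].
    unfold exp_coef. apply Rmult_le_pos; [|apply pow_le; auto].
    apply Rmult_le_pos; [auto|apply Rlt_le, Rinv_0_lt_compat, lt_0_INR, lt_O_fact].
  - destruct (ex_pseries_exp_coef A v i s Hi) as [l Hl]. exists l.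
    eapply is_series_ext; [|apply Hl]. intros n. cbn. rewrite pow_n_pow.
    unfold scal; cbn; unfold mult; cbn; ring.
Qed.

(* Shifting [q] by [M I] makes it entrywise nonnegative, and e^{sq} = e^{-Ms} e^{s (q + M I)}. *)
Lemma exp_ps_nonneg q v s i :
  (forall i j, (i < d)%nat -> (j < d)%nat -> i <> j -> 0 <= q i j) ->
  (forall j, (j < d)%nat -> 0 <= v j) -> 0 <= s -> (i < d)%nat -> 0 <= exp_ps q v s i.
Proof.
  intros Hoff Hv Hs Hi.
  destruct (mat_abs_bound q) as [M [HM Hq]].
  set (A := fun i j => q i j + (if Nat.eq_dec i j then M else 0)).
  assert (HA : forall i j, (i < d)%nat -> (j < d)%nat -> 0 <= A i j).
  { intros k j Hk Hj. unfold A. destruct (Nat.eq_dec k j) as [->|Hne].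
    - specialize (Hq j j Hj Hj). pose proof (Rle_abs (- q j j)). rewrite Rabs_Ropp in *. lra.
    - specialize (Hoff k j Hk Hj Hne). lra. }
  set (Y := fun i s => exp (- (M * s)) * exp_ps A v s i).
  assert (HY : linear_ode q Y).
  { intros k x Hk. unfold Y. eapply is_derive_eq.
    { apply (is_derive_Rmult (fun s => exp (- (M * s))) (fun s => exp_ps A v s k)).
      - apply is_derive_exp_scal.
      - apply is_derive_exp_ps; auto. }
    rewrite (sumR_ext _ (fun j => A k j * exp_ps A v x j)
               (fun j => q k j * exp_ps A v x j
                         + (if Nat.eq_dec k j then M else 0) * exp_ps A v x j))
      by (intros; unfold A; ring).
    rewrite sumR_plus, sumR_kronecker by auto.
    transitivity (exp (- (M * x)) * sumR d (fun j => q k j * exp_ps A v x j)); [cbn; ring|].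
    rewrite <- sumR_scal. apply sumR_ext; intros; ring. }
  rewrite (linear_ode_unique q (fun i s => exp_ps q v s i) Y (linear_ode_exp_ps q v) HY)
    with (s := s); auto.
  - unfold Y. apply Rmult_le_pos; [apply Rlt_le, exp_pos|apply exp_ps_nonneg_of_nonneg; auto].
  - intros j Hj. unfold Y. rewrite !exp_ps_0, Rmult_0_r, Ropp_0, exp_0. ring.
Qed.

Lemma exp_ps_const q c s i : is_Qmatrix d q -> 0 <= s -> (i < d)%nat ->
  exp_ps q (fun _ => c) s i = c.
Proof.
  intros [_ [_ Hrow]] Hs Hi.
  apply (linear_ode_unique q (fun i s => exp_ps q (fun _ => c) s i) (fun _ _ => c)); auto.
  - apply linear_ode_exp_ps.
  - apply linear_ode_const; auto.
  - intros; apply exp_ps_0.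
Qed.

Lemma exp_ps_le_sub q v w eps s i : is_Qmatrix d q ->
  (forall j, (j < d)%nat -> w j - eps <= v j) -> 0 <= s -> (i < d)%nat ->
  exp_ps q w s i - eps <= exp_ps q v s i.
Proof.
  intros HQ Hvw Hs Hi.
  pose proof (exp_ps_nonneg q (fun j => v j - w j + eps) s i (proj1 (proj2 HQ))
                ltac:(intros j Hj; specialize (Hvw j Hj); lra) Hs Hi) as Hpos.
  rewrite <- (linear_ode_unique q
      (fun i s => 1 * (1 * exp_ps q v s i + -1 * exp_ps q w s i) + 1 * eps)
      (fun i s => exp_ps q (fun j => v j - w j + eps) s i)) with (s := s) in Hpos; auto.
  - lra.
  - apply linear_ode_lincomb; [apply linear_ode_lincomb; apply linear_ode_exp_ps|].
    apply linear_ode_const, HQ.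
  - apply linear_ode_exp_ps.
  - intros; rewrite !exp_ps_0; ring.
Qed.

Definition exp_int (q : mat) (g : vec) (s : R) (i : nat) : R := PSeries (PS_Int (exp_coef q g i)) s.

Lemma exp_int_0 q g i : exp_int q g 0 i = 0.
Proof. unfold exp_int. apply PSeries_0. Qed.

Lemma is_derive_exp_int q g s i : (i < d)%nat ->
  is_derive (fun s => exp_int q g s i) s (exp_ps q g s i).
Proof.
  intros Hi. unfold exp_int, exp_ps. eapply is_derive_eq.
  - apply is_derive_PSeries. rewrite CV_radius_Int. apply exp_coef_CV_radius; auto.
  - apply PSeries_ext. intros n. unfold PS_derive, PS_Int. field. apply not_0_INR; lia.
Qed.

Lemma exp_ps_eq_int q g s i : (i < d)%nat ->
  exp_ps q g s i = g i + sumR d (fun j => q i j * exp_int q g s j).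
Proof.
  intros Hi.
  set (D s := exp_ps q g s i - g i - sumR d (fun j => q i j * exp_int q g s j)).
  enough (D s = 0) by (unfold D in *; lra).
  rewrite (derive0_eq D s).
  - unfold D. rewrite exp_ps_0, sumR_eq0; [ring|]. intros; rewrite exp_int_0; ring.
  - intros x. unfold D. eapply is_derive_eq.
    + apply is_derive_Rminus; [apply is_derive_Rminus|].
      * apply is_derive_exp_ps; auto.
      * apply is_derive_Rconst.
      * apply is_derive_sumR. intros j Hj. apply is_derive_Rscal, is_derive_exp_int; auto.
    + cbn; ring.
Qed.

Lemma exp_int_nonpos q g s i : is_Qmatrix d q -> (forall j, (j < d)%nat -> g j <= 0) ->
  0 <= s -> (i < d)%nat -> exp_int q g s i <= 0.
Proof.
  intros HQ Hg Hs Hi.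
  destruct (MVT_gen (fun s => exp_int q g s i) 0 s (fun s => exp_ps q g s i)) as [c [Hc Heq]].
  - intros; apply is_derive_exp_int; auto.
  - intros; eapply is_derive_continuity_pt, is_derive_exp_int; auto.
  - rewrite exp_int_0 in Heq. rewrite Rmin_left, Rmax_right in Hc by lra.
    pose proof (exp_ps_le_sub q (fun _ => 0) g 0 c i HQ
                  ltac:(intros j Hj; specialize (Hg j Hj); lra) ltac:(lra) Hi) as Hle.
    rewrite exp_ps_const in Hle by (auto; lra).
    simpl in Heq. nra.
Qed.

Definition flow (q : mat) (g : vec) (s : R) (v : vec) (i : nat) : R :=
  exp_ps q v s i + exp_int q g s i.

Lemma flow_0 q g v i : flow q g 0 v i = v i.
Proof. unfold flow. rewrite exp_ps_0, exp_int_0. ring. Qed.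

Lemma is_derive_flow q g v s i : (i < d)%nat ->
  is_derive (fun s => flow q g s v i) s (sumR d (fun j => q i j * flow q g s v j) + g i).
Proof.
  intros Hi. unfold flow. eapply is_derive_eq.
  - apply is_derive_Rplus; [apply is_derive_exp_ps|apply is_derive_exp_int]; auto.
  - rewrite exp_ps_eq_int by auto.
    rewrite (sumR_ext d (fun j => q i j * (exp_ps q v s j + exp_int q g s j))
               (fun j => q i j * exp_ps q v s j + q i j * exp_int q g s j)), sumR_plus
      by (intros; ring).
    cbn; ring.
Qed.

Lemma flow_continuity_pt q g v s i : (i < d)%nat -> continuity_pt (fun s => flow q g s v i) s.
Proof. intros Hi. eapply is_derive_continuity_pt, is_derive_flow; auto. Qed.

(* Both sides solve the same affine ODE in [s], so their difference solves [y' = q y]. *)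
Lemma flow_add q g v s h i : 0 <= s -> (i < d)%nat ->
  flow q g (s + h) v i = flow q g s (fun j => flow q g h v j) i.
Proof.
  intros Hs Hi.
  enough (1 * flow q g (s + h) v i + -1 * flow q g s (fun j => flow q g h v j) i = 0) by lra.
  apply (linear_ode_zero q (fun i s => 1 * flow q g (s + h) v i
                                       + -1 * flow q g s (fun j => flow q g h v j) i)); auto.
  - intros k x Hk. eapply is_derive_eq.
    + apply is_derive_Rplus; apply is_derive_Rscal;
        [apply (is_derive_shift (fun s => flow q g s v k))|]; apply is_derive_flow; auto.
    + rewrite (sumR_ext d (fun j => q k j * (1 * flow q g (x + h) v j
                                           + -1 * flow q g x (fun j => flow q g h v j) j))
                 (fun j => 1 * (q k j * flow q g (x + h) v j)
                                  + -1 * (q k j * flow q g x (fun j => flow q g h v j) j)))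
        by (intros; ring).
      rewrite sumR_plus, !sumR_scal. cbn; ring.
  - intros k Hk. rewrite Rplus_0_l, flow_0. ring.
Qed.

Lemma flow_le_sub q g v w eps s i : is_Qmatrix d q ->
  (forall j, (j < d)%nat -> w j - eps <= v j) -> 0 <= s -> (i < d)%nat ->
  flow q g s w i - eps <= flow q g s v i.
Proof.
  intros HQ Hvw Hs Hi. unfold flow.
  pose proof (exp_ps_le_sub q v w eps s i HQ Hvw Hs Hi). lra.
Qed.

Lemma flow_le q g v m s i : is_Qmatrix d q -> (forall j, (j < d)%nat -> g j <= 0) ->
  (forall j, (j < d)%nat -> v j <= m) -> 0 <= s -> (i < d)%nat -> flow q g s v i <= m.
Proof.
  intros HQ Hg Hv Hs Hi. unfold flow.
  pose proof (exp_ps_le_sub q (fun _ => m) v 0 s i HQ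
                ltac:(intros j Hj; specialize (Hv j Hj); lra) Hs Hi) as Hle.
  rewrite exp_ps_const in Hle by auto.
  pose proof (exp_int_nonpos q g s i HQ Hg Hs Hi). lra.
Qed.

Lemma expm_exp_ps q s w i : (i < d)%nat -> expm d q s w i = exp_ps q w s i.
Proof.
  intros Hi. unfold expm, Rlim.
  assert (Hc : Un_cv (fun N => sum_f_R0 (fun k => s ^ k / INR (fact k) * mpow d q k w i) N)
                     (exp_ps q w s i)).
  { apply is_lim_seq_Reals.
    eapply is_lim_seq_ext; [|apply (PSeries_correct _ _ (ex_pseries_exp_coef q w i s Hi))].
    intros n. rewrite sum_n_Reals. apply sum_eq. intros k _.
    change (pow_n s k * exp_coef q w i k = s ^ k / INR (fact k) * mpow d q k w i).
    rewrite pow_n_pow. unfold exp_coef. field. apply INR_fact_neq_0. }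
  apply (UL_sequence _ _ _ (epsilon_spec _ _ (ex_intro _ _ Hc)) Hc).
Qed.

Lemma Rint_exp_int q g h i : (i < d)%nat ->
  Rint (fun s => expm d q s g i) 0 h = exp_int q g h i.
Proof.
  intros Hi.
  replace (fun s => expm d q s g i) with (fun s => exp_ps q g s i)
    by (apply functional_extensionality; intros; rewrite expm_exp_ps; auto).
  assert (HI : is_RInt (fun s => exp_ps q g s i) 0 h (exp_int q g h i))
    by (apply is_RInt_PSeries, exp_coef_CV_radius; auto).
  assert (Hex : exists I, exists pr : Riemann_integrable (fun s => exp_ps q g s i) 0 h,
                  RiemannInt pr = I)
    by (eexists; exists (ex_RInt_Reals_0 _ _ _ (ex_intro _ _ HI)); reflexivity).
  unfold Rint. destruct (epsilon_spec (inhabits 0) _ Hex) as [pr <-].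
  rewrite <- RInt_Reals. apply is_RInt_unique; auto.
Qed.

Lemma Sq_flow q g s v i : (i < d)%nat -> Sq d q g s v i = flow q g s v i.
Proof. intros Hi. unfold Sq, flow. rewrite expm_exp_ps, Rint_exp_int; auto. Qed.

End LinearFlow.

Lemma uniform_delta n (Q : nat -> R -> Prop) h :
  (forall i, (i < n)%nat -> exists dl, 0 < dl /\ forall y, Rabs (y - h) < dl -> Q i y) ->
  exists dl, 0 < dl /\ forall i, (i < n)%nat -> forall y, Rabs (y - h) < dl -> Q i y.
Proof.
  induction n as [|n IH]; intros H; [exists 1; split; [lra|intros; lia]|].
  destruct IH as [d1 [Hd1 H1]]; [intros; apply H; lia|].
  destruct (H n ltac:(lia)) as [d2 [Hd2 H2]].
  exists (Rmin d1 d2). split; [apply Rmin_pos; auto|].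
  intros i Hi y Hy. pose proof (Rmin_l d1 d2). pose proof (Rmin_r d1 d2).
  destruct (Nat.eq_dec i n) as [->|Hne]; [apply H2; lra|apply H1; [lia|lra]].
Qed.

Lemma Un_cv_growing_lub (u : nat -> R) (E : R -> Prop) L :
  Un_growing u -> is_lub E L -> (forall n, E (u n)) ->
  (forall x eps, E x -> 0 < eps -> exists N, x - eps <= u N) -> Un_cv u L.
Proof.
  intros Hgrow [Hub Hleast] HE Happrox eps He.
  destruct (classic (exists x, E x /\ L - eps / 2 < x)) as [[x [Hx Hlt]]|Hnone].
  - destruct (Happrox x (eps / 2) Hx ltac:(lra)) as [N HN].
    exists N. intros n Hn. unfold R_dist.
    pose proof (growing_prop u n N Hgrow Hn). pose proof (Hub (u n) (HE n)).
    apply Rabs_def1; lra.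
  - enough (L <= L - eps / 2) by lra.
    apply Hleast. intros x Hx. apply Rnot_lt_le. intros Hlt. apply Hnone. eauto.
Qed.


Lemma StronglySorted_hd_lt a l x : StronglySorted Rlt (a :: l) -> In x l -> a < x.
Proof. intros H Hx. apply StronglySorted_inv in H as [_ H]. rewrite Forall_forall in H. auto. Qed.

Lemma StronglySorted_tail a l : StronglySorted Rlt (a :: l) -> StronglySorted Rlt l.
Proof. intros H. apply StronglySorted_inv in H; tauto. Qed.

Lemma StronglySorted_hd_le a l x : StronglySorted Rlt (a :: l) -> In x (a :: l) -> a <= x.
Proof. intros Hs [->|Hx]; [lra|]. pose proof (StronglySorted_hd_lt _ _ _ Hs Hx). lra. Qed.

Lemma StronglySorted_le_last a l x :
  StronglySorted Rlt (a :: l) -> In x (a :: l) -> x <= last (a :: l) 0.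
Proof.
  revert a x. induction l as [|b l IH]; intros a x Hs Hx.
  - destruct Hx as [->|[]]. simpl; lra.
  - change (last (a :: b :: l) 0) with (last (b :: l) 0).
    pose proof (IH b b (StronglySorted_tail _ _ Hs) (or_introl eq_refl)).
    destruct Hx as [<-|Hx].
    + pose proof (StronglySorted_hd_lt _ _ b Hs (or_introl eq_refl)). lra.
    + apply IH; auto. apply (StronglySorted_tail _ _ Hs).
Qed.

Lemma last_In a l : In (last (a :: l) 0) (a :: l).
Proof.
  revert a. induction l as [|b l IH]; intros a; [left; auto|].
  change (In (last (b :: l) 0) (a :: b :: l)). right. apply IH.
Qed.

Lemma last_map_cons (g : R -> R) a l : last (map g (a :: l)) 0 = g (last (a :: l) 0).
Proof.
  revert a. induction l as [|b l IH]; intros a; [reflexivity|].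
  change (last (map g (b :: l)) 0 = g (last (b :: l) 0)). apply IH.
Qed.

Lemma StronglySorted_map_Rlt (g : R -> R) l : StronglySorted Rlt l ->
  (forall a b, In a l -> In b l -> a < b -> g a < g b) -> StronglySorted Rlt (map g l).
Proof.
  induction l as [|x r IH]; intros Hs Hg; simpl; constructor.
  - apply IH; [apply (StronglySorted_tail _ _ Hs)|]. intros; apply Hg; auto; right; auto.
  - rewrite Forall_forall. intros z Hz. apply in_map_iff in Hz as [p [<- Hp]].
    apply Hg; [left|right|apply (StronglySorted_hd_lt _ _ _ Hs)]; auto.
Qed.

Fixpoint min_gap (l : list R) : R :=
  match l with
  | x :: ((y :: _) as r) => Rmin (y - x) (min_gap r)
  | _ => 1
  end.

Lemma min_gap_pos l : StronglySorted Rlt l -> 0 < min_gap l.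
Proof.
  induction l as [|x [|y r] IH]; intros Hs; simpl; try lra.
  apply Rmin_pos; [|apply IH, (StronglySorted_tail _ _ Hs)].
  pose proof (StronglySorted_hd_lt _ _ y Hs (or_introl eq_refl)). lra.
Qed.

Lemma min_gap_le l a b : StronglySorted Rlt l -> In a l -> In b l -> a < b -> min_gap l <= b - a.
Proof.
  induction l as [|x [|y r] IH]; intros Hs Ha Hb Hab; [destruct Ha| |].
  - destruct Ha as [<-|[]]. destruct Hb as [<-|[]]. lra.
  - change (min_gap (x :: y :: r)) with (Rmin (y - x) (min_gap (y :: r))).
    pose proof (Rmin_l (y - x) (min_gap (y :: r))). pose proof (Rmin_r (y - x) (min_gap (y :: r))).
    pose proof (StronglySorted_tail _ _ Hs) as Hs'.
    destruct Ha as [<-|Ha], Hb as [<-|Hb]; try lra.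
    + pose proof (StronglySorted_hd_le _ _ _ Hs' Hb). lra.
    + pose proof (StronglySorted_hd_lt _ _ _ Hs Ha). lra.
    + pose proof (IH Hs' Ha Hb Hab). lra.
Qed.

Fixpoint snap_left (p a : R) (l : list R) : R :=
  match l with
  | [] => a
  | x :: r => if Rle_dec x p then snap_left p x r else a
  end.

Lemma snap_left_In p a l : In (snap_left p a l) (a :: l).
Proof.
  revert a. induction l as [|x r IH]; intros a; simpl; auto.
  destruct (Rle_dec x p); [right; apply IH|left; auto].
Qed.

Lemma snap_left_le p a l : a <= p -> snap_left p a l <= p.
Proof.
  revert a. induction l as [|x r IH]; intros a Ha; simpl; auto.
  destruct (Rle_dec x p); auto.
Qed.

Lemma snap_left_close p dl a l :
  a <= p -> p <= last (a :: l) 0 -> mesh_aux a l < dl -> p - snap_left p a l < dl.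
Proof.
  revert a. induction l as [|x r IH]; intros a Ha Hl Hm; simpl in *; [lra|].
  pose proof (Rmax_l (x - a) (mesh_aux x r)). pose proof (Rmax_r (x - a) (mesh_aux x r)).
  destruct (Rle_dec x p); [apply IH|]; auto; lra.
Qed.

Lemma snap_left_id p a l : StronglySorted Rlt (a :: l) -> In p (a :: l) -> snap_left p a l = p.
Proof.
  revert a. induction l as [|x r IH]; intros a Hs Hp; simpl.
  - destruct Hp as [->|[]]; auto.
  - pose proof (StronglySorted_hd_lt _ _ x Hs (or_introl eq_refl)).
    destruct Hp as [<-|Hp].
    + destruct (Rle_dec x a); [lra|auto].
    + pose proof (StronglySorted_hd_le _ _ _ (StronglySorted_tail _ _ Hs) Hp).
      destruct (Rle_dec x p); [|lra]. apply IH; auto. apply (StronglySorted_tail _ _ Hs).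
Qed.

Lemma is_partition_t_cons t l : is_partition_t t l ->
  exists rest, l = 0 :: rest /\ StronglySorted Rlt (0 :: rest) /\ last (0 :: rest) 0 = t.
Proof.
  intros [[Hh Hs] Hl]. destruct l as [|a rest]; simpl in Hh; [lra|]. subst a. eauto.
Qed.

Section NisioOperators.

Variable d : nat.
Variable P : mat -> Prop.
Variable f : mat -> vec.

Hypothesis HQ : forall q, P q -> is_Qmatrix d q.
Hypothesis Hf : forall q, P q -> forall j, (j < d)%nat -> f q j <= 0.
Hypothesis HP : exists q, P q.

Lemma Eh_is_lub h v i : 0 <= h -> (i < d)%nat ->
  is_lub (fun x => exists q, P q /\ x = Sq d q (f q) h v i) (Eh d P f h v i).
Proof.
  intros Hh Hi. destruct HP as [q0 Hq0]. destruct (vec_upper_bound d v) as [m Hm].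
  apply Rsup_lub; [exists (Sq d q0 (f q0) h v i); eauto|].
  exists m. intros x [q [Hq ->]]. rewrite Sq_flow by auto. apply flow_le; auto.
Qed.

Lemma Eh_ge h v i q : 0 <= h -> (i < d)%nat -> P q -> flow d q (f q) h v i <= Eh d P f h v i.
Proof.
  intros Hh Hi Hq. rewrite <- Sq_flow by auto.
  apply (Eh_is_lub h v i Hh Hi). eauto.
Qed.

Lemma Eh_le h v i M : 0 <= h -> (i < d)%nat ->
  (forall q, P q -> flow d q (f q) h v i <= M) -> Eh d P f h v i <= M.
Proof.
  intros Hh Hi HM. apply (Eh_is_lub h v i Hh Hi).
  intros x [q [Hq ->]]. rewrite Sq_flow; auto.
Qed.

Lemma Eh_le_bound h v i m : 0 <= h -> (i < d)%nat ->
  (forall j, (j < d)%nat -> v j <= m) -> Eh d P f h v i <= m.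
Proof. intros Hh Hi Hm. apply Eh_le; auto. intros q Hq. apply flow_le; auto. Qed.

Lemma Eh_le_sub h v w eps i : 0 <= h -> (i < d)%nat ->
  (forall j, (j < d)%nat -> w j - eps <= v j) -> Eh d P f h w i - eps <= Eh d P f h v i.
Proof.
  intros Hh Hi Hvw.
  enough (Eh d P f h w i <= Eh d P f h v i + eps) by lra.
  apply Eh_le; auto. intros q Hq.
  pose proof (flow_le_sub d q (f q) v w eps h i (HQ q Hq) Hvw Hh Hi).
  pose proof (Eh_ge h v i q Hh Hi Hq). lra.
Qed.

(* [S_q(h+k) = S_q(h) o S_q(k) <= S_q(h) o E_k] by monotonicity of [S_q(h)]. *)
Lemma Eh_add_le h k v i : 0 <= h -> 0 <= k -> (i < d)%nat ->
  Eh d P f (h + k) v i <= Eh d P f h (Eh d P f k v) i.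
Proof.
  intros Hh Hk Hi. apply Eh_le; [lra|auto|]. intros q Hq.
  rewrite flow_add by auto.
  pose proof (flow_le_sub d q (f q) (Eh d P f k v) (fun j => flow d q (f q) k v j) 0 h i (HQ q Hq)
                ltac:(intros j Hj; pose proof (Eh_ge k v j q Hk Hj Hq); lra) Hh Hi).
  pose proof (Eh_ge h (Eh d P f k v) i q Hh Hi Hq). lra.
Qed.

Lemma Eh_0 v i : (i < d)%nat -> Eh d P f 0 v i = v i.
Proof.
  intros Hi. destruct HP as [q0 Hq0]. apply Rle_antisym.
  - apply Eh_le; [lra|auto|]. intros q Hq. rewrite flow_0. lra.
  - rewrite <- (flow_0 d q0 (f q0) v i). apply Eh_ge; auto; lra.
Qed.

(* A supremum of the continuous maps [h |-> S_q(h) v] is lower semicontinuous. *)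
Lemma Eh_lsc h v eps : 0 <= h -> 0 < eps ->
  exists dl, 0 < dl /\ forall i, (i < d)%nat -> forall h', Rabs (h' - h) < dl -> 0 <= h' ->
    Eh d P f h v i - eps <= Eh d P f h' v i.
Proof.
  intros Hh He.
  destruct (uniform_delta d (fun i h' => 0 <= h' -> Eh d P f h v i - eps <= Eh d P f h' v i) h)
    as [dl [Hdl H]]; [|exists dl; split; auto].
  intros i Hi.
  destruct (classic (exists q, P q /\ Eh d P f h v i - eps / 2 < flow d q (f q) h v i))
    as [[q [Hq Hlt]]|Hnone].
  - destruct (flow_continuity_pt d q (f q) v h i Hi (eps / 2) ltac:(lra)) as [alp [Halp Hc]].
    exists alp; split; auto. intros y Hy Hy0.
    pose proof (Eh_ge y v i q Hy0 Hi Hq).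
    destruct (Req_dec y h) as [->|Hne]; [lra|].
    assert (Rabs (flow d q (f q) y v i - flow d q (f q) h v i) < eps / 2)
      by (apply (Hc y); split; [split; [exact I|auto]|exact Hy]).
    pose proof (Rle_abs (- (flow d q (f q) y v i - flow d q (f q) h v i))).
    rewrite Rabs_Ropp in *. lra.
  - exfalso. enough (Eh d P f h v i <= Eh d P f h v i - eps / 2) by lra.
    apply Eh_le; auto. intros q Hq. apply Rnot_lt_le. intros Hlt. apply Hnone. eauto.
Qed.

Lemma Eh_monotone h v w i : 0 <= h -> (i < d)%nat ->
  (forall j, (j < d)%nat -> w j <= v j) -> Eh d P f h w i <= Eh d P f h v i.
Proof.
  intros Hh Hi Hvw.
  pose proof (Eh_le_sub h v w 0 i Hh Hi ltac:(intros j Hj; specialize (Hvw j Hj); lra)). lra.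
Qed.

Lemma Epi_cons a rest u i : (i < d)%nat -> Epi d P f (a :: rest) u i = Epi_aux d P f a rest u i.
Proof. intros Hi. destruct rest; simpl; [apply Eh_0; auto|reflexivity]. Qed.

Lemma Epi_aux_le_bound rest prev v m i : StronglySorted Rlt (prev :: rest) ->
  (forall j, (j < d)%nat -> v j <= m) -> (i < d)%nat -> Epi_aux d P f prev rest v i <= m.
Proof.
  revert prev i. induction rest as [|a rest IH]; intros prev i Hs Hv Hi; simpl; auto.
  pose proof (StronglySorted_hd_lt _ _ a Hs (or_introl eq_refl)).
  apply Eh_le_bound; [lra|auto|]. intros j Hj. apply IH; auto. apply (StronglySorted_tail _ _ Hs).
Qed.

(* Inserting a point [y] before [x] replaces [E_(x-prev)] by [E_(y-prev) o E_(x-y)], which is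
   larger by [Eh_add_le]. *)
Lemma Epi_aux_le_refine u T rest' prev rest i :
  StronglySorted Rlt (prev :: rest) -> StronglySorted Rlt (prev :: rest') ->
  (forall x, In x rest -> In x rest') -> last (prev :: rest) 0 = T ->
  (forall y, In y rest' -> y <= T) -> (i < d)%nat ->
  Epi_aux d P f prev rest u i <= Epi_aux d P f prev rest' u i.
Proof.
  revert prev rest i.
  induction rest' as [|y r' IH]; intros prev [|x r] i Hs Hs' Hsub Hlast Hle Hi.
  - lra.
  - destruct (Hsub x (or_introl eq_refl)).
  - pose proof (StronglySorted_hd_lt _ _ y Hs' (or_introl eq_refl)).
    specialize (Hle y (or_introl eq_refl)). simpl in Hlast. lra.
  - pose proof (StronglySorted_hd_lt _ _ x Hs (or_introl eq_refl)).
    pose proof (StronglySorted_hd_lt _ _ y Hs' (or_introl eq_refl)).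
    pose proof (StronglySorted_tail _ _ Hs) as Hr. pose proof (StronglySorted_tail _ _ Hs') as Hr'.
    assert (Hsub' : forall z, In z r -> In z r').
    { intros z Hz. pose proof (StronglySorted_hd_lt _ _ _ Hr Hz).
      destruct (Hsub z (or_intror Hz)) as [<-|]; auto.
      destruct (Hsub x (or_introl eq_refl)) as [<-|Hx]; [lra|].
      pose proof (StronglySorted_hd_lt _ _ _ Hr' Hx). lra. }
    simpl. destruct (Hsub x (or_introl eq_refl)) as [<-|Hx].
    + apply Eh_monotone; [lra|auto|]. intros j Hj.
      apply IH; auto. intros z Hz; apply Hle; right; auto.
    + pose proof (StronglySorted_hd_lt _ _ _ Hr' Hx).
      replace (x - prev) with ((y - prev) + (x - y)) by ring.
      eapply Rle_trans; [apply Eh_add_le; auto; lra|].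
      apply Eh_monotone; [lra|auto|]. intros j Hj.
      apply (IH y (x :: r)); auto.
      * constructor; auto. apply Forall_forall. intros z [<-|Hz]; auto.
        pose proof (StronglySorted_hd_lt _ _ _ Hr Hz). lra.
      * intros z [<-|Hz]; auto.
      * intros z Hz; apply Hle; right; auto.
Qed.

Lemma Epi_le_of_incl u t l l' i : is_partition_t t l -> is_partition_t t l' ->
  (forall x, In x l -> In x l') -> (i < d)%nat -> Epi d P f l u i <= Epi d P f l' u i.
Proof.
  intros Hl Hl' Hsub Hi.
  destruct (is_partition_t_cons t l Hl) as [r [-> [Hs Hlast]]].
  destruct (is_partition_t_cons t l' Hl') as [r' [-> [Hs' Hlast']]].
  rewrite !Epi_cons by auto. apply (Epi_aux_le_refine u t); auto.
  - intros x Hx. pose proof (StronglySorted_hd_lt _ _ _ Hs Hx).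
    destruct (Hsub x (or_intror Hx)) as [<-|]; auto. lra.
  - intros y Hy. rewrite <- Hlast'. apply StronglySorted_le_last; auto. right; auto.
Qed.

Lemma Epi_le_bound u t l m i : is_partition_t t l ->
  (forall j, (j < d)%nat -> u j <= m) -> (i < d)%nat -> Epi d P f l u i <= m.
Proof.
  intros Hl Hm Hi. destruct (is_partition_t_cons t l Hl) as [r [-> [Hs _]]].
  rewrite Epi_cons by auto. apply (Epi_aux_le_bound r 0); auto.
Qed.

Lemma Nisio_is_lub u t l i : is_partition_t t l -> (i < d)%nat ->
  is_lub (fun x => exists a, is_partition_t t a /\ x = Epi d P f a u i) (Nisio d P f t u i).
Proof.
  intros Hl Hi. destruct (vec_upper_bound d u) as [m Hm].
  apply Rsup_lub; [eauto|]. exists m. intros x [a [Ha ->]]. apply (Epi_le_bound u t); auto.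
Qed.

Lemma Epi_aux_perturb u rest prev eps : StronglySorted Rlt (prev :: rest) -> 0 <= prev -> 0 < eps ->
  exists dl, 0 < dl /\ forall prev' g, StronglySorted Rlt (prev' :: map g rest) ->
    Rabs (prev' - prev) < dl -> (forall p, In p rest -> Rabs (g p - p) < dl) ->
    forall i, (i < d)%nat ->
      Epi_aux d P f prev rest u i - eps <= Epi_aux d P f prev' (map g rest) u i.
Proof.
  revert prev eps. induction rest as [|a rest IH]; intros prev eps Hs Hp He.
  { exists 1. split; [lra|]. intros. simpl. lra. }
  pose proof (StronglySorted_hd_lt _ _ a Hs (or_introl eq_refl)).
  destruct (IH a (eps / 2) (StronglySorted_tail _ _ Hs) ltac:(lra) ltac:(lra)) as [d1 [Hd1 H1]].
  destruct (Eh_lsc (a - prev) (Epi_aux d P f a rest u) (eps / 2) ltac:(lra) ltac:(lra))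
    as [d2 [Hd2 H2]].
  exists (Rmin d1 (d2 / 2)). split; [apply Rmin_pos; lra|].
  intros prev' g Hs' Hpp Hg i Hi. pose proof (Rmin_l d1 (d2 / 2)). pose proof (Rmin_r d1 (d2 / 2)).
  simpl in *.
  pose proof (StronglySorted_hd_lt _ _ (g a) Hs' (or_introl eq_refl)).
  pose proof (Rabs_def2 _ _ (Hg a (or_introl eq_refl))). pose proof (Rabs_def2 _ _ Hpp).
  assert (Hrest : forall j, (j < d)%nat ->
            Epi_aux d P f a rest u j - eps / 2 <= Epi_aux d P f (g a) (map g rest) u j).
  { intros j Hj. apply H1; auto; [apply (StronglySorted_tail _ _ Hs')|apply Rabs_def1; lra|].
    intros p Hp'. specialize (Hg p (or_intror Hp')). lra. }
  pose proof (Eh_le_sub (g a - prev') _ _ (eps / 2) i ltac:(lra) Hi Hrest).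
  pose proof (H2 i Hi (g a - prev') ltac:(apply Rabs_def1; lra) ltac:(lra)). lra.
Qed.

(* Snapping each point of [l] to the nearest point of [sg] on its left yields a coarsening
   of [sg] close to [l], and coarsenings can only decrease [E]. *)
Lemma Epi_approx_fine u t l eps : is_partition_t t l -> 0 < eps ->
  exists dl, 0 < dl /\ forall sg, is_partition_t t sg -> mesh sg < dl ->
    forall i, (i < d)%nat -> Epi d P f l u i - eps <= Epi d P f sg u i.
Proof.
  intros Hl He. destruct (is_partition_t_cons t l Hl) as [rl [-> [Hsl Hll]]].
  destruct (Epi_aux_perturb u rl 0 eps Hsl ltac:(lra) He) as [d1 [Hd1 H1]].
  set (dl := Rmin d1 (min_gap (0 :: rl))).
  assert (Hdl : 0 < dl) by (apply Rmin_pos; [lra|apply min_gap_pos; auto]).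
  exists dl. split; auto. intros sg Hsg Hmesh i Hi.
  assert (dl <= d1 /\ dl <= min_gap (0 :: rl)) as [Hd1l Hdlg]
    by (split; [apply Rmin_l|apply Rmin_r]).
  destruct (is_partition_t_cons t sg Hsg) as [rs [-> [Hss Hls]]].
  set (g p := snap_left p 0 rs).
  assert (Hg : forall p, In p (0 :: rl) -> g p <= p /\ p - g p < dl /\ In (g p) (0 :: rs)).
  { intros p Hp. pose proof (StronglySorted_hd_le _ _ _ Hsl Hp).
    pose proof (StronglySorted_le_last _ _ _ Hsl Hp).
    split; [apply snap_left_le; auto|split; [|apply snap_left_In]].
    apply snap_left_close; auto. rewrite Hls, <- Hll; auto. }
  assert (Hmap : 0 :: map g rl = map g (0 :: rl))
    by (simpl; f_equal; symmetry; apply snap_left_id; auto; left; auto).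
  assert (Hsort : StronglySorted Rlt (0 :: map g rl)).
  { rewrite Hmap. apply StronglySorted_map_Rlt; auto. intros a b Ha Hb Hab.
    pose proof (min_gap_le _ a b Hsl Ha Hb Hab).
    destruct (Hg a Ha) as [? _], (Hg b Hb) as [_ [? _]]. lra. }
  rewrite !Epi_cons by auto.
  eapply Rle_trans.
  { apply (H1 0 g Hsort); auto; [rewrite Rminus_0_r, Rabs_R0; lra|].
    intros p Hp. destruct (Hg p (or_intror Hp)) as [? [? _]]. apply Rabs_def1; lra. }
  apply (Epi_aux_le_refine u t); auto.
  - intros z Hz. apply in_map_iff in Hz as [p [<- Hp]].
    destruct (Hg p (or_intror Hp)) as [_ [_ [Hz|Hz]]]; auto.
    pose proof (StronglySorted_hd_lt _ _ (g p) Hsort (in_map g _ _ Hp)). lra.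
  - rewrite Hmap, last_map_cons, Hll. apply snap_left_id; auto. rewrite <- Hls. apply last_In.
  - intros y Hy. rewrite <- Hls. apply StronglySorted_le_last; auto. right; auto.
Qed.

End NisioOperators.

Theorem mainTheorem5 (d : nat) (P : mat -> Prop) (f : mat -> vec)
  (HQ : forall q, P q -> is_Qmatrix d q)
  (Hf0 : exists q0, P q0 /\ forall i, (i < d)%nat -> f q0 i = 0)
  (Hfle : forall q, P q -> forall i, (i < d)%nat -> f q i <= 0)
  (Hfin : forall u : vec, forall i, (i < d)%nat ->
     exists M, forall q, P q -> mv d q u i + f q i <= M)
  (t : R) (Ht : 0 <= t) (pi : nat -> list R)
  (Hpi : forall n, is_partition_t t (pi n))
  (Hnest : forall n x, In x (pi n) -> In x (pi (S n)))
  (Hmesh_dec : Un_decreasing (fun n => mesh (pi n)))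
  (Hmesh_cv : Un_cv (fun n => mesh (pi n)) 0) :
  forall u0 : vec, forall i, (i < d)%nat ->
    Un_growing (fun n => Epi d P f (pi n) u0 i) /\
    Un_cv (fun n => Epi d P f (pi n) u0 i) (Nisio d P f t u0 i).
Proof.
  intros u0 i Hi.
  assert (HP : exists q, P q) by (destruct Hf0 as [q0 [Hq0 _]]; eauto).
  assert (Hgrow : Un_growing (fun n => Epi d P f (pi n) u0 i))
    by (intros n; apply (Epi_le_of_incl d P f HQ Hfle HP u0 t); auto).
  split; [exact Hgrow|].
  apply (Un_cv_growing_lub _ _ _ Hgrow
           (Nisio_is_lub d P f HQ Hfle HP u0 t (pi 0%nat) i (Hpi 0%nat) Hi));
    [intros n; eauto|].
  intros x eps [l [Hl ->]] He.
  destruct (Epi_approx_fine d P f HQ Hfle HP u0 t l eps Hl He) as [dl [Hdl Happrox]].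
  destruct (Hmesh_cv dl Hdl) as [N HN]. exists N.
  apply Happrox; auto.
  specialize (HN N (le_n N)). unfold R_dist in HN. rewrite Rminus_0_r in HN.
  pose proof (Rle_abs (mesh (pi N))). lra.
Qed.
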